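(* Let $X\subset\mathcal M=\mathbb R^4$ be a timelike straight line. Let $\mathtt{Aut}^{\rm c}_X$ be the subgroup of $\mathtt{Aut}^{\rm c}$ consisting of those $f$ with $f(X)=X$. Let $S$ be a non-trivial $\mathtt{Aut}^{\rm c}_X$-invariant equivalence relation on $\mathcal M$. Suppose there exist $p\in X$ and $q\notin X$ with $S(p,q)$. Then $S$ is standard Einstein simultaneity relative to $X$: for all $r,s\in\mathcal M$, $S(r,s)$ holds iff $\eta(s-r,u)=0$, where $u$ is a direction vector of $X$. Equivalently, the equivalence classes are exactly the hyperplanes Minkowski-orthogonal to $X$.
   Context: Spacetime is $\mathcal M=\mathbb R^4$, with points $(t,\vec x)$, equipped with the Minkowski bilinear form $\eta(x,y)=x^0y^0-x^1y^1-x^2y^2-x^3y^3$. A straight line is timelike if its direction vector $u$ satisfies $\eta(u,u)>0$. $\mathtt{Aut}^{\rm c}$ (the causal automorphism group) is the group of all bijections $f$ of $\mathbb R^4$ such that, for all $p,q$, $\eta(p-q,p-q)\ge0$ iff $\eta(f(p)-f(q),f(p)-f(q))\ge0$. Equivalently (a result of Alexandrov), $\mathtt{Aut}^{\rm c}$ is the group generated by: - the maps $p\mapsto Lp+a$ with $a\in\mathbb R^4$ and $L$ a real $4\times4$ matrix with $L\eta L^{\top}=\eta$, $\det L=1$, $L^0{}_0\ge1$; - the time reflection $(t,\vec x)\mapsto(-t,\vec x)$; - the space reflection $(t,\vec x)\mapsto(t,-\vec x)$; - the dilatations $p\mapsto\lambda p$ with $\lambda>0$. An equivalence relation $S$ is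 $G$-invariant if $S(p,q)\Leftrightarrow S(g\cdot p,g\cdot q)$ for all $g\in G$ and all $p,q$. It is non-trivial if it is neither the one-class relation nor the equality relation. *)

From Stdlib Require Import Reals.
Open Scope R_scope.

(* Points of Minkowski space M = R^4, coordinates (t, x1, x2, x3). *)
Record pt := mkpt { c0 : R; c1 : R; c2 : R; c3 : R }.

Definition padd (p q : pt) : pt :=
  mkpt (c0 p + c0 q) (c1 p + c1 q) (c2 p + c2 q) (c3 p + c3 q).
Definition psub (p q : pt) : pt :=
  mkpt (c0 p - c0 q) (c1 p - c1 q) (c2 p - c2 q) (c3 p - c3 q).
Definition pscale (k : R) (p : pt) : pt :=
  mkpt (k * c0 p) (k * c1 p) (k * c2 p) (k * c3 p).

Definition eta (x y : pt) : R :=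
  c0 x * c0 y - c1 x * c1 y - c2 x * c2 y - c3 x * c3 y.

Definition causal (p q : pt) : Prop := eta (psub p q) (psub p q) >= 0.

Definition bijective_map (f : pt -> pt) : Prop :=
  (forall x y, f x = f y -> x = y) /\ (forall y, exists x, f x = y).

Definition AutC (f : pt -> pt) : Prop :=
  bijective_map f /\ (forall p q, causal p q <-> causal (f p) (f q)).

Definition line (a u : pt) : pt -> Prop :=
  fun p => exists t : R, p = padd a (pscale t u).

Definition timelike (u : pt) : Prop := eta u u > 0.

Definition maps_onto_itself (f : pt -> pt) (X : pt -> Prop) : Prop :=
  (forall p, X p -> X (f p)) /\ (forall q, X q -> exists p, X p /\ f p = q).

Definition AutC_X (X : pt -> Prop) (f : pt -> pt) : Prop :=
  AutC f /\ maps_onto_itself f X.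

Definition equivalence_rel (S : pt -> pt -> Prop) : Prop :=
  (forall p, S p p) /\ (forall p q, S p q -> S q p) /\
  (forall p q r, S p q -> S q r -> S p r).

Definition invariant (G : (pt -> pt) -> Prop) (S : pt -> pt -> Prop) : Prop :=
  forall g, G g -> forall p q, S p q <-> S (g p) (g q).

Definition nontrivial (S : pt -> pt -> Prop) : Prop :=
  ~ (forall p q, S p q) /\ ~ (forall p q, S p q <-> p = q).

(* Aut^c_X contains the dilatations centred on X, the translations along X,
   the reflection in the hyperplane through a point of X orthogonal to X, and
   the reflections in the timelike hyperplanes containing X.  The dilatations
   act transitively on X minus their centre, so an S-class containing two
   points of X contains all of X.  The time reflection at the foot c of q fixes
   q and moves p (unless p = c), hence S c q.  Positive dilatations at c and
   the reflections containing X act transitively on the nonzero vectors of the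
   spacelike hyperplane orthogonal to X, and translations along X move c, so
   every point is S-related to its foot on X.  Consequently S-related points
   have the same foot, for otherwise S would have a single class. *)

From Stdlib Require Import Reals Lra Psatz Classical.
Open Scope R_scope.

Definition pzero : pt := mkpt 0 0 0 0.

Lemma pt_ext (x y : pt) :
  c0 x = c0 y -> c1 x = c1 y -> c2 x = c2 y -> c3 x = c3 y -> x = y.
Proof. destruct x, y; simpl; intros; subst; reflexivity. Qed.

(* Only for goals without section variables of type [pt]: [destruct] cannot
   clear those, so the [repeat] would never stop. *)
Ltac expand_pts :=
  repeat match goal with p : pt |- _ => destruct p end;
  unfold pzero, eta, psub, padd, pscale in *; simpl in *.

Lemma padd_psub (c r : pt) : padd c (psub r c) = r.
Proof. expand_pts; apply pt_ext; simpl; ring. Qed.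

Lemma padd_pzero (c : pt) : padd c pzero = c.
Proof. expand_pts; apply pt_ext; simpl; ring. Qed.

Lemma psub_eq0 (x y : pt) : psub x y = pzero -> x = y.
Proof. expand_pts; intros h; injection h; intros; apply pt_ext; simpl; lra. Qed.

Lemma eta_psub_l (x y z : pt) : eta (psub x y) z = eta x z - eta y z.
Proof. expand_pts; ring. Qed.

Lemma eta_pscale_l (k : R) (x z : pt) : eta (pscale k x) z = k * eta x z.
Proof. expand_pts; ring. Qed.

Lemma eta_psub_diag (x y : pt) : eta (psub x x) y = 0.
Proof. expand_pts; ring. Qed.

Lemma eta_sym (x y : pt) : eta x y = eta y x.
Proof. expand_pts; ring. Qed.

Lemma eta_pscale (k : R) (x : pt) : eta (pscale k x) (pscale k x) = k * k * eta x x.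
Proof. expand_pts; ring. Qed.

Lemma line_psub (a u : pt) (t s : R) :
  psub (padd a (pscale t u)) (padd a (pscale s u)) = pscale (t - s) u.
Proof. expand_pts; apply pt_ext; simpl; ring. Qed.

Lemma line_param_inj (a u : pt) (t s : R) : eta u u <> 0 ->
  padd a (pscale t u) = padd a (pscale s u) -> t = s.
Proof.
  intros Hu E.
  assert (H : eta (psub (padd a (pscale t u)) (padd a (pscale s u))) u = 0)
    by (rewrite E; apply eta_psub_diag).
  rewrite line_psub, eta_pscale_l in H. nra.
Qed.

Lemma cauchy_schwarz3 (x1 x2 x3 y1 y2 y3 : R) :
  (x1 * y1 + x2 * y2 + x3 * y3) ^ 2 <=
  (x1 ^ 2 + x2 ^ 2 + x3 ^ 2) * (y1 ^ 2 + y2 ^ 2 + y3 ^ 2).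
Proof.
  assert (0 <= (x1 * y2 - x2 * y1) ^ 2 + (x1 * y3 - x3 * y1) ^ 2 + (x2 * y3 - x3 * y2) ^ 2)
    by (repeat apply Rplus_le_le_0_compat; apply pow2_ge_0).
  nra.
Qed.

Lemma eta_perp_timelike_lt0 (x u : pt) :
  timelike u -> eta x u = 0 -> x <> pzero -> eta x x < 0.
Proof.
  unfold timelike; intros Hu Hx Hx0.
  destruct (Rlt_le_dec (eta x x) 0) as [|Hxx]; [assumption | exfalso; apply Hx0].
  destruct x as [x0 x1 x2 x3], u as [u0 u1 u2 u3]; unfold pzero, eta in *; simpl in *.
  pose proof (cauchy_schwarz3 x1 x2 x3 u1 u2 u3) as CS.
  replace (x1 * u1 + x2 * u2 + x3 * u3) with (x0 * u0) in CS by lra.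
  assert (x0 = 0).
  { destruct (Req_dec x0 0) as [|Hx00]; [assumption | exfalso].
    assert (0 < x0 ^ 2) by (simpl; nra).
    assert (0 <= u1 ^ 2 + u2 ^ 2 + u3 ^ 2) by nra.
    nra. }
  subst x0.
  assert (x1 = 0) by nra. assert (x2 = 0) by nra. assert (x3 = 0) by nra.
  subst; reflexivity.
Qed.

Definition dilation (c : pt) (l : R) (z : pt) : pt := padd c (pscale l (psub z c)).
Definition translation (v z : pt) : pt := padd z v.
Definition reflection (c n z : pt) : pt :=
  psub z (pscale (2 * eta (psub z c) n / eta n n) n).

Lemma dilationK (c : pt) (l : R) (z : pt) : l <> 0 -> dilation c l (dilation c (/ l) z) = z.
Proof. intros. unfold dilation; expand_pts; apply pt_ext; simpl; field; auto. Qed.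

Lemma dilation_eta (c : pt) (l : R) (p q : pt) :
  eta (psub (dilation c l p) (dilation c l q)) (psub (dilation c l p) (dilation c l q))
  = l * l * eta (psub p q) (psub p q).
Proof. unfold dilation; expand_pts; ring. Qed.

Lemma dilation_center (c : pt) (l : R) : dilation c l c = c.
Proof. unfold dilation; expand_pts; apply pt_ext; simpl; ring. Qed.

Lemma dilation_padd (c w : pt) (l : R) : dilation c l (padd c w) = padd c (pscale l w).
Proof. unfold dilation; expand_pts; apply pt_ext; simpl; ring. Qed.

Lemma dilation_on_line (a u : pt) (s t l : R) :
  dilation (padd a (pscale s u)) l (padd a (pscale t u)) = padd a (pscale (s + l * (t - s)) u).
Proof. unfold dilation; expand_pts; apply pt_ext; simpl; ring. Qed.

Lemma translationK (s : R) (v z : pt) :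
  translation (pscale s v) (translation (pscale (- s) v) z) = z.
Proof. unfold translation; expand_pts; apply pt_ext; simpl; ring. Qed.

Lemma translation_eta (v p q : pt) :
  eta (psub (translation v p) (translation v q)) (psub (translation v p) (translation v q))
  = 1 * eta (psub p q) (psub p q).
Proof. unfold translation; expand_pts; ring. Qed.

Lemma translation_padd (v c w : pt) : translation v (padd c w) = padd (translation v c) w.
Proof. unfold translation; expand_pts; apply pt_ext; simpl; ring. Qed.

Lemma translation_on_line (a u : pt) (s t : R) :
  translation (pscale s u) (padd a (pscale t u)) = padd a (pscale (t + s) u).
Proof. unfold translation; expand_pts; apply pt_ext; simpl; ring. Qed.

Lemma reflectionK (c n z : pt) : eta n n <> 0 -> reflection c n (reflection c n z) = z.
Proof. intros. unfold reflection; expand_pts; apply pt_ext; simpl; field; auto. Qed.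

Lemma reflection_eta (c n p q : pt) : eta n n <> 0 ->
  eta (psub (reflection c n p) (reflection c n q)) (psub (reflection c n p) (reflection c n q))
  = 1 * eta (psub p q) (psub p q).
Proof. intros. unfold reflection; expand_pts; field; auto. Qed.

Lemma reflection_fix (c n z : pt) : eta (psub z c) n = 0 -> reflection c n z = z.
Proof.
  intros H. unfold reflection. rewrite H, Rmult_0_r, Rdiv_0_l.
  expand_pts; apply pt_ext; simpl; ring.
Qed.

Lemma reflection_on_line (a u : pt) (s t : R) : eta u u <> 0 ->
  reflection (padd a (pscale s u)) u (padd a (pscale t u)) = padd a (pscale (2 * s - t) u).
Proof. intros. unfold reflection; expand_pts; apply pt_ext; simpl; field; auto. Qed.

Lemma reflection_swap (c w v : pt) :
  eta w w = eta v v -> eta (psub w v) (psub w v) <> 0 ->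
  reflection c (psub w v) (padd c w) = padd c v.
Proof.
  intros E N. unfold reflection.
  replace (2 * eta (psub (padd c w) c) (psub w v) / eta (psub w v) (psub w v)) with 1.
  - expand_pts; apply pt_ext; simpl; ring.
  - assert (2 * eta (psub (padd c w) c) (psub w v) = eta (psub w v) (psub w v))
      by (revert E; expand_pts; intros; nra).
    field_simplify_eq; auto.
Qed.

Lemma AutC_X_of_similarity (X : pt -> Prop) (f g : pt -> pt) (k : R) : 0 < k ->
  (forall z, f (g z) = z) -> (forall z, g (f z) = z) ->
  (forall p q, eta (psub (f p) (f q)) (psub (f p) (f q)) = k * eta (psub p q) (psub p q)) ->
  (forall p, X p -> X (f p)) -> (forall p, X p -> X (g p)) ->
  AutC_X X f.
Proof.
  intros Hk fK gK Hf fX gX. split; [split|split].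
  - split.
    + intros x y E. rewrite <- (gK x), <- (gK y), E; reflexivity.
    + intros y; exists (g y); auto.
  - intros p q; unfold causal; rewrite Hf; split; intros; nra.
  - exact fX.
  - intros q Hq; exists (g q); auto.
Qed.

Section LineSymmetries.
Variables a u : pt.

Lemma dilation_line (c z : pt) (l : R) :
  line a u c -> line a u z -> line a u (dilation c l z).
Proof. intros [s ->] [t ->]. rewrite dilation_on_line. eexists; reflexivity. Qed.

Lemma dilation_AutC_X (c : pt) (l : R) : line a u c -> l <> 0 -> AutC_X (line a u) (dilation c l).
Proof.
  intros Hc Hl. apply (AutC_X_of_similarity _ _ (dilation c (/ l)) (l * l)).
  - nra.
  - intros; apply dilationK; auto.
  - intros z. rewrite <- (Rinv_inv l) at 2. apply dilationK, Rinv_neq_0_compat, Hl.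
  - apply dilation_eta.
  - intros; apply dilation_line; auto.
  - intros; apply dilation_line; auto.
Qed.

Lemma translation_AutC_X (s : R) : AutC_X (line a u) (translation (pscale s u)).
Proof.
  apply (AutC_X_of_similarity _ _ (translation (pscale (- s) u)) 1).
  - lra.
  - intros; apply translationK.
  - intros z. rewrite <- (Ropp_involutive s) at 2. apply translationK.
  - apply translation_eta.
  - intros p [t ->]. rewrite translation_on_line. eexists; reflexivity.
  - intros p [t ->]. rewrite translation_on_line. eexists; reflexivity.
Qed.

Lemma time_reflection_AutC_X (c : pt) :
  eta u u <> 0 -> line a u c -> AutC_X (line a u) (reflection c u).
Proof.
  intros Hu Hc.
  assert (HX : forall p, line a u p -> line a u (reflection c u p)).
  { intros p Hp. destruct Hc as [s ->], Hp as [t ->].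
    rewrite reflection_on_line by assumption. eexists; reflexivity. }
  apply (AutC_X_of_similarity _ _ (reflection c u) 1); auto; try lra.
  - intros; apply reflectionK; auto.
  - intros; apply reflectionK; auto.
  - intros; apply reflection_eta; auto.
Qed.

Lemma space_reflection_fix_line (c n z : pt) :
  line a u c -> eta n u = 0 -> line a u z -> reflection c n z = z.
Proof.
  intros [s ->] Hn [t ->]. apply reflection_fix.
  rewrite line_psub, eta_pscale_l, eta_sym, Hn. ring.
Qed.

Lemma space_reflection_AutC_X (c n : pt) :
  line a u c -> eta n u = 0 -> eta n n <> 0 -> AutC_X (line a u) (reflection c n).
Proof.
  intros Hc Hn Hnn. apply (AutC_X_of_similarity _ _ (reflection c n) 1).
  - lra.
  - intros; apply reflectionK; auto.
  - intros; apply reflectionK; auto.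
  - intros; apply reflection_eta; auto.
  - intros p Hp. rewrite space_reflection_fix_line; auto.
  - intros p Hp. rewrite space_reflection_fix_line; auto.
Qed.

End LineSymmetries.

Definition foot (a u r : pt) : pt := padd a (pscale (eta (psub r a) u / eta u u) u).

Lemma foot_line (a u r : pt) : line a u (foot a u r).
Proof. eexists; reflexivity. Qed.

Lemma eta_psub_foot (a u r s : pt) :
  eta u u <> 0 -> eta (psub s (foot a u r)) u = eta (psub s r) u.
Proof. intros. unfold foot; expand_pts; field; auto. Qed.

Section InvariantRelation.
Variables (a u : pt) (S : pt -> pt -> Prop).
Hypothesis HS : equivalence_rel S.
Hypothesis HSinv : invariant (AutC_X (line a u)) S.

Let S_refl : forall p, S p p := proj1 HS.
Let S_sym : forall p q, S p q -> S q p := proj1 (proj2 HS).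
Let S_trans : forall p q r, S p q -> S q r -> S p r := proj2 (proj2 HS).

Lemma S_image (f : pt -> pt) (p q : pt) : AutC_X (line a u) f -> S p q -> S (f p) (f q).
Proof. intros Hf; apply (HSinv f Hf). Qed.

Lemma S_line_collapse (x y : pt) : line a u x -> line a u y -> x <> y -> S x y ->
  forall z z', line a u z -> line a u z' -> S z z'.
Proof.
  intros Hx Hy Hxy Sxy.
  enough (Sx : forall z, line a u z -> S x z) by eauto.
  intros z Hz. destruct Hx as [tx Ex], Hy as [ty Ey], Hz as [tz ->].
  destruct (Req_dec tz tx) as [->|Hzx]; [rewrite Ex; apply S_refl|].
  assert (Hyx : ty <> tx) by (intros ->; apply Hxy; congruence).
  set (l := (tz - tx) / (ty - tx)).
  assert (Hl : tx + l * (ty - tx) = tz) by (unfold l; field; lra).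
  assert (Hl0 : l <> 0) by (intros E; rewrite E in Hl; lra).
  apply (S_image (dilation x l)) in Sxy; [|apply dilation_AutC_X; eauto; eexists; eauto].
  rewrite Ex, Ey, !dilation_on_line, Rminus_diag, Rmult_0_r, Rplus_0_r, Hl in Sxy.
  rewrite Ex. exact Sxy.
Qed.

Section Perpendicular.
Hypothesis Hu : timelike u.

Lemma S_perp_scale (c w : pt) (k : R) : line a u c -> k <> 0 ->
  S c (padd c w) -> S c (padd c (pscale k w)).
Proof.
  intros Hc Hk Scw. apply (S_image (dilation c k)) in Scw; [|apply dilation_AutC_X; auto].
  rewrite dilation_center, dilation_padd in Scw. exact Scw.
Qed.

(* The reflection exchanging c + w and c + v fixes X because w - v is orthogonal to u. *)
Lemma S_perp_swap (c w v : pt) : line a u c -> eta w u = 0 -> eta v u = 0 ->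
  eta w w = eta v v -> S c (padd c w) -> S c (padd c v).
Proof.
  intros Hc Hw Hv Ewv Scw.
  destruct (classic (w = v)) as [<-|Hwv]; [exact Scw|].
  assert (Hn : eta (psub w v) u = 0) by (rewrite eta_psub_l, Hw, Hv; ring).
  assert (Hnn : eta (psub w v) (psub w v) < 0).
  { apply (eta_perp_timelike_lt0 _ u Hu Hn). intros E; apply Hwv, psub_eq0, E. }
  apply (S_image (reflection c (psub w v))) in Scw;
    [|apply space_reflection_AutC_X; auto; lra].
  rewrite (space_reflection_fix_line a u c _ c), reflection_swap in Scw; auto; lra.
Qed.

Lemma S_perp_translate (c c' v : pt) : line a u c -> line a u c' ->
  S c (padd c v) -> S c' (padd c' v).
Proof.
  intros [s ->] [t ->] Scv.
  apply (S_image (translation (pscale (t - s) u))) in Scv; [|apply translation_AutC_X].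
  rewrite translation_on_line, translation_padd, translation_on_line in Scv.
  replace (s + (t - s)) with t in Scv by ring. exact Scv.
Qed.

Lemma S_perp_all (c w : pt) : line a u c -> eta w u = 0 -> w <> pzero ->
  S c (padd c w) -> forall c' v, line a u c' -> eta v u = 0 -> S c' (padd c' v).
Proof.
  intros Hc Hw Hw0 Scw c' v Hc' Hv. apply (S_perp_translate c); auto.
  destruct (classic (v = pzero)) as [->|Hv0]; [rewrite padd_pzero; apply S_refl|].
  pose proof (eta_perp_timelike_lt0 w u Hu Hw Hw0) as Hww.
  pose proof (eta_perp_timelike_lt0 v u Hu Hv Hv0) as Hvv.
  set (k := sqrt (eta v v / eta w w)).
  assert (Hratio : 0 < eta v v / eta w w).
  { replace (eta v v / eta w w) with (- eta v v / - eta w w) by (field; lra).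
    apply Rdiv_lt_0_compat; lra. }
  assert (Hk : 0 < k) by apply sqrt_lt_R0, Hratio.
  assert (Hkk : k * k * eta w w = eta v v)
    by (unfold k; rewrite sqrt_sqrt by lra; field; lra).
  apply (S_perp_swap c (pscale k w)); auto.
  - rewrite eta_pscale_l, Hw; ring.
  - rewrite eta_pscale; exact Hkk.
  - apply S_perp_scale; auto; lra.
Qed.

(* The time reflection at c = foot q fixes q and sends p to 2c - p. *)
Lemma S_foot_of_witness (p q : pt) : line a u p -> S p q -> S (foot a u q) q.
Proof.
  intros Hp Spq. unfold timelike in Hu.
  set (c := foot a u q).
  assert (Hc : line a u c) by apply foot_line.
  assert (Hqc : eta (psub q c) u = 0).
  { unfold c. rewrite eta_psub_foot by lra. apply eta_psub_diag. }
  destruct (classic (p = c)) as [<-|Hpc]; [exact Spq|].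
  pose proof (time_reflection_AutC_X a u c ltac:(lra) Hc) as Hrefl.
  pose proof (S_image _ _ _ Hrefl Spq) as Spq'.
  rewrite (reflection_fix c u q Hqc) in Spq'.
  pose proof (proj1 (proj2 Hrefl) p Hp) as Hp'.
  assert (Hpp' : p <> reflection c u p).
  { destruct Hc as [s Ec], Hp as [t Ep]. rewrite Ec, Ep, reflection_on_line by lra.
    intros E. apply line_param_inj in E; [|lra].
    apply Hpc. rewrite Ep, Ec. do 3 f_equal. lra. }
  apply (S_trans _ p); [|exact Spq].
  apply (S_line_collapse p (reflection c u p)); eauto.
Qed.

Lemma S_foot_perp (p q : pt) : line a u p -> ~ line a u q -> S p q ->
  forall r s, eta (psub s r) u = 0 -> S (foot a u r) s.
Proof.
  intros Hp Hq Spq r s Hrs.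
  assert (Hu0 : eta u u <> 0) by (unfold timelike in Hu; lra).
  rewrite <- (padd_psub (foot a u r) s).
  apply (S_perp_all (foot a u q) (psub q (foot a u q))); try apply foot_line.
  - rewrite eta_psub_foot by exact Hu0. apply eta_psub_diag.
  - intros E. apply Hq. rewrite (psub_eq0 _ _ E). apply foot_line.
  - rewrite padd_psub. eapply S_foot_of_witness; eauto.
  - rewrite eta_psub_foot by exact Hu0. exact Hrs.
Qed.

End Perpendicular.

Lemma S_perp_of_not_full :
  eta u u <> 0 -> ~ (forall x y, S x y) ->
  (forall r s, eta (psub s r) u = 0 -> S (foot a u r) s) ->
  forall r s, S r s -> eta (psub s r) u = 0.
Proof.
  intros Hu0 Hnot_full Hfoot r s Srs. apply NNPP; intros Hrs. apply Hnot_full.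
  assert (S_foot : forall x, S x (foot a u x)) by (intros; apply S_sym, Hfoot, eta_psub_diag).
  assert (Hfeet : foot a u r <> foot a u s).
  { intros E. apply Hrs.
    rewrite <- (eta_psub_foot a u r s Hu0), E, eta_psub_foot by assumption.
    apply eta_psub_diag. }
  assert (S_X : forall x y, line a u x -> line a u y -> S x y).
  { apply (S_line_collapse _ _ (foot_line a u r) (foot_line a u s) Hfeet).
    apply (S_trans _ r); [apply S_sym, S_foot|].
    apply (S_trans _ s); [exact Srs | apply S_foot]. }
  intros x y. apply (S_trans _ (foot a u x)); [apply S_foot|].
  apply (S_trans _ (foot a u y)); [apply S_X; apply foot_line | apply S_sym, S_foot].
Qed.

End InvariantRelation.

Theorem theorem7 (a u : pt) (S : pt -> pt -> Prop) :
  timelike u ->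
  equivalence_rel S ->
  invariant (AutC_X (line a u)) S ->
  nontrivial S ->
  (exists p q, line a u p /\ ~ line a u q /\ S p q) ->
  forall r s, S r s <-> eta (psub s r) u = 0.
Proof.
  intros Hu HS Hinv [Hnot_full _] [p [q [Hp [Hq Spq]]]].
  assert (Hu0 : eta u u <> 0) by (unfold timelike in Hu; lra).
  pose proof (S_foot_perp a u S HS Hinv Hu p q Hp Hq Spq) as Hfoot.
  intros r s; split.
  - exact (S_perp_of_not_full a u S HS Hinv Hu0 Hnot_full Hfoot r s).
  - intros Hrs. destruct HS as [_ [S_sym S_trans]].
    apply (S_trans _ (foot a u r)); [apply S_sym, Hfoot, eta_psub_diag | apply Hfoot, Hrs].
Qed.
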